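(* Let $q>0$, $q\neq1$, $\hbar,m>0$. Let $\psi:(\mathbb{R}\setminus\{0\})\times\mathbb{R}\to\mathbb{C}$ be differentiable in $t$, nowhere zero, and satisfy $\partial_t\psi=\frac{i\hbar}{2m}D_x^2\psi$. Define $u(x,t)=-\frac{i\hbar}{m}\frac{D_x\psi(x,t)}{\psi(x,t)}$. Then for all $x\ne0$ and $t$, $$i\hbar\,\partial_tu(x,t)+\frac{\hbar^2}{2m}D_x^2u(x,t)=\frac{i\hbar}{2}u(x,t)\big[(1-M_q^x)D_xu\big](x,t)-\frac{i\hbar}{2}D_x\big(u(qx,t)u(x,t)\big)+\frac m2\big[u(q^2x,t)-u(x,t)\big]u(qx,t)u(x,t).$$
   Context: $D_x$ is the $q$-derivative in $x$ at fixed $t$: $D_xf(x,t)=\frac{f(qx,t)-f(x,t)}{(q-1)x}$, $D_x^2=D_x\circ D_x$; $\partial_t$ is the ordinary time derivative. $M_q^x$ is the dilation operator $(M_q^xf)(x,t)=f(qx,t)$. *)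

From Stdlib Require Export Reals.
From Coquelicot Require Export Coquelicot.
Open Scope R_scope.

Definition Dq (q : R) (f : R -> R -> C) : R -> R -> C :=
  fun x t => ((f (q * x)%R t - f x t) / RtoC ((q - 1) * x))%C.

Definition Dq2 (q : R) (f : R -> R -> C) : R -> R -> C := Dq q (Dq q f).

Definition Mq (q : R) (f : R -> R -> C) : R -> R -> C := fun x t => f (q * x) t.

(** The quotient rule gives [d_t u] in terms of [d_t psi] at [x] and [q x], and
    the Schroedinger equation turns these into second q-derivatives of [psi].
    After this substitution both sides of the identity are rational expressions
    in [psi] at [x, q x, q^2 x, q^3 x] (the point [q^3 x] enters through
    [D_x^2 u]) with nonvanishing denominators, and they agree as rational
    functions, with [i^2 = -1] the only relation needed. *)
From Stdlib Require Import Lra.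
Open Scope R_scope.

Lemma C_R_basis_decomp (z : C) :
  @plus C_R_NormedModule (scal (fst z) ((1, 0) : C)) (scal (snd z) ((0, 1) : C)) = z.
Proof.
destruct z as [a b]; unfold plus, scal; simpl.
unfold prod_plus, prod_scal, plus, scal, mult; simpl; unfold mult; simpl.
f_equal; ring.
Qed.

Lemma is_derive_C (f : R -> C) (t : R) (l : C) :
  is_derive f t l <->
  is_derive (fun s => fst (f s)) t (fst l) /\
  is_derive (fun s => snd (f s)) t (snd l).
Proof.
split.
- intros Hf; split; eapply filterdiff_ext_lin.
  + apply (filterdiff_comp f (fun p : C => fst p) _ (fun p : C => fst p) Hf).
    apply filterdiff_linear, (@is_linear_fst R_AbsRing R_NormedModule R_NormedModule).
  + reflexivity.
  + apply (filterdiff_comp f (fun p : C => snd p) _ (fun p : C => snd p) Hf).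
    apply filterdiff_linear, (@is_linear_snd R_AbsRing R_NormedModule R_NormedModule).
  + reflexivity.
- intros [H1 H2].
  pose proof (is_derive_plus _ _ _ _ _
    (@is_derive_scal_l R_AbsRing C_R_NormedModule _ t _ (1, 0) H1)
    (@is_derive_scal_l R_AbsRing C_R_NormedModule _ t _ (0, 1) H2)) as H.
  rewrite C_R_basis_decomp in H.
  eapply is_derive_ext; [| exact H].
  intros s; apply C_R_basis_decomp.
Qed.

Lemma is_derive_Cmult (f g : R -> C) (t : R) (df dg : C) :
  is_derive f t df -> is_derive g t dg ->
  is_derive (fun s => (f s * g s)%C) t (df * g t + f t * dg)%C.
Proof.
intros [F1 F2]%is_derive_C [G1 G2]%is_derive_C; apply is_derive_C; split.
- pose proof (is_derive_minus _ _ _ _ _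
    (Derive.is_derive_mult _ _ _ _ _ F1 G1) (Derive.is_derive_mult _ _ _ _ _ F2 G2)) as H.
  replace (fst _) with (minus (fst df * fst (g t) + fst (f t) * fst dg)
                              (snd df * snd (g t) + snd (f t) * snd dg)).
  + exact H.
  + unfold minus, plus, opp; simpl; ring.
- pose proof (is_derive_plus _ _ _ _ _
    (Derive.is_derive_mult _ _ _ _ _ F1 G2) (Derive.is_derive_mult _ _ _ _ _ F2 G1)) as H.
  replace (snd _) with (plus (fst df * snd (g t) + fst (f t) * snd dg)
                             (snd df * fst (g t) + snd (f t) * fst dg)).
  + exact H.
  + unfold plus; simpl; ring.
Qed.

Lemma is_derive_Cinv (f : R -> C) (t : R) (df : C) :
  is_derive f t df -> f t <> 0%C ->
  is_derive (fun s => (/ f s)%C) t (- df / (f t * f t))%C.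
Proof.
intros [F1 F2]%is_derive_C Hnz.
assert (Hpos : 0 < fst (f t) ^ 2 + snd (f t) ^ 2).
{ destruct (f t) as [a b]; simpl.
  apply Rnot_le_lt; intros Hle; apply Hnz.
  assert (a = 0 /\ b = 0) as [-> ->] by nra; reflexivity. }
assert (Hn : fst (f t) ^ 2 + snd (f t) ^ 2 <> 0) by lra.
pose proof (is_derive_inv _ _ _
  (is_derive_plus _ _ _ _ _ (is_derive_pow _ 2 _ _ F1) (is_derive_pow _ 2 _ _ F2)) Hn)
  as Hinv.
apply is_derive_C; split.
- refine (eq_rect _ (is_derive _ t) (Derive.is_derive_mult _ _ _ _ _ F1 Hinv) _ _).
  destruct df as [d1 d2], (f t) as [a b]; simpl in *.
  unfold plus; simpl; field; split; nra.
- refine (eq_rect _ (is_derive _ t)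
    (Derive.is_derive_mult _ _ _ _ _ (is_derive_opp _ _ _ F2) Hinv) _ _).
  destruct df as [d1 d2], (f t) as [a b]; simpl in *.
  unfold plus, opp; simpl; field; split; nra.
Qed.

Lemma is_derive_Cconst (c : C) (t : R) : is_derive (fun _ : R => c) t (RtoC 0).
Proof. exact (@is_derive_const R_AbsRing C_R_NormedModule c t). Qed.

Lemma is_derive_Cmult_const_l (c : C) (f : R -> C) (t : R) (df : C) :
  is_derive f t df -> is_derive (fun s => (c * f s)%C) t (c * df)%C.
Proof.
intros Hf.
refine (@eq_rect C _ (is_derive _ t) (is_derive_Cmult _ _ t _ _ (is_derive_Cconst c t) Hf) _ _).
ring.
Qed.

Lemma is_derive_Cmult_const_r (c : C) (f : R -> C) (t : R) (df : C) :
  is_derive f t df -> is_derive (fun s => (f s * c)%C) t (df * c)%C.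
Proof.
intros Hf.
refine (@eq_rect C _ (is_derive _ t) (is_derive_Cmult _ _ t _ _ Hf (is_derive_Cconst c t)) _ _).
ring.
Qed.

Lemma is_derive_Cdiv (f g : R -> C) (t : R) (df dg : C) :
  is_derive f t df -> is_derive g t dg -> g t <> 0%C ->
  is_derive (fun s => (f s / g s)%C) t ((df * g t - f t * dg) / (g t * g t))%C.
Proof.
intros Hf Hg Hnz.
refine (@eq_rect C _ (is_derive _ t) (is_derive_Cmult _ _ t _ _ Hf (is_derive_Cinv _ t _ Hg Hnz)) _ _).
field; auto.
Qed.

Lemma is_derive_Dq (q : R) (f df : R -> R -> C) (x t : R) :
  is_derive (f x) t (df x t) -> is_derive (f (q * x)) t (df (q * x) t) ->
  is_derive (fun s => Dq q f x s) t (Dq q df x t).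
Proof.
intros Hx Hqx.
exact (is_derive_Cmult_const_r _ _ t _ (is_derive_minus _ _ _ _ _ Hqx Hx)).
Qed.

Lemma RtoC_neq_0 (a : R) : a <> 0 -> RtoC a <> 0%C.
Proof. intros Ha E; apply Ha; injection E; auto. Qed.

Theorem mainTheorem14 (q hbar m : R) (psi : R -> R -> C) :
  0 < q -> q <> 1 -> 0 < hbar -> 0 < m ->
  (forall x t, x <> 0 -> psi x t <> RtoC 0) ->
  (forall x t, x <> 0 ->
     is_derive (fun s => psi x s) t
       (Ci * RtoC hbar / RtoC (2 * m) * Dq2 q psi x t)%C) ->
  let u : R -> R -> C :=
    fun x t => (- (Ci * RtoC hbar / RtoC m) * (Dq q psi x t / psi x t))%C in
  forall x t, x <> 0 ->
    exists dtu : C,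
      is_derive (fun s => u x s) t dtu /\
      (Ci * RtoC hbar * dtu
       + RtoC (hbar ^ 2 / (2 * m)) * Dq2 q u x t)%C
      = (Ci * RtoC hbar / 2 * u x t * (Dq q u x t - Mq q (Dq q u) x t)
         - Ci * RtoC hbar / 2 * Dq q (fun y s => u (q * y)%R s * u y s) x t
         + RtoC m / 2 * (u (q ^ 2 * x)%R t - u x t) * u (q * x)%R t * u x t)%C.
Proof.
intros Hq Hq1 _ Hm Hnz Hschr u x t Hx.
set (psit := fun y s => (Ci * RtoC hbar / RtoC (2 * m) * Dq2 q psi y s)%C).
assert (Hqx : q * x <> 0) by (apply Rmult_integral_contrapositive; lra).
assert (Hq2x : q * (q * x) <> 0) by (apply Rmult_integral_contrapositive; lra).
assert (Hq3x : q * (q * (q * x)) <> 0) by (apply Rmult_integral_contrapositive; lra).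
eexists; split.
- apply is_derive_Cmult_const_l, is_derive_Cdiv; auto.
  apply (is_derive_Dq q psi psit); auto.
- replace (q ^ 2 * x) with (q * (q * x)) by ring.
  pose proof (Hnz x t Hx); pose proof (Hnz _ t Hqx);
  pose proof (Hnz _ t Hq2x); pose proof (Hnz _ t Hq3x).
  assert (Hi : (Ci * Ci = - (1))%C) by (unfold Ci, Cmult, Copp; simpl; f_equal; ring).
  unfold u, psit, Dq2, Dq, Mq.
  rewrite (RtoC_div (hbar ^ 2) (2 * m)) by lra.
  rewrite !RtoC_mult, !RtoC_minus, RtoC_pow.
  field [Hi].
  repeat split; auto; rewrite <- ?RtoC_minus; apply RtoC_neq_0; lra.
Qed.
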